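(* Consider a slotted system with diversity. There are $N$ users, $N_{sub}\ge2$ sub-carriers and slots $1,\dots,T$, where $0<\alpha<1$, $\alpha T\in\mathbb Z$ and $(1-\alpha)T$ is even. The BS uses pmfs $\mathbf p$ on users and $\mathbf q$ on sub-carriers: in every slot, independently, it chooses user $i$ with probability $p_i$ and sub-carrier $j$ with probability $q_j$, and sends an update to the chosen user on the chosen sub-carrier. The adversary uses the strategy $\sigma'$: in each slot $t\in\{\frac{(1-\alpha)T}2+1,\dots,\frac{(1+\alpha)T}2\}$ it blocks one sub-carrier chosen uniformly at random, independently of everything else, and it blocks nothing in other slots. Ages satisfy $a_i(1)=1$, $a_i(t+1)=1$ if user $i$ is chosen in slot $t$ on an unblocked sub-carrier, and $a_i(t+1)=a_i(t)+1$ otherwise. Let $\Delta^{\mathbf p,\mathbf q,\sigma'}=\frac1T\sum_{t=1}^T\frac1N\sum_i\mathbb E[a_i(t)]$. Then the pair (uniform $\mathbf p$, uniform $\mathbf q$) minimizes $\Delta^{\mathbf p,\mathbf q,\sigma'}$ over all pmfs $\mathbf p$ on the users and $\mathbf q$ on the sub-carriers.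
   Context: The expectation is over both the BS's and the adversary's randomness. *)

From HB Require Import structures.
From mathcomp Require Import all_boot all_order all_algebra.
Set Implicit Arguments. Unset Strict Implicit. Unset Printing Implicit Defensive.
Import Order.TTheory GRing.Theory Num.Theory.
Local Open Scope ring_scope.

Section Model.
Variables (R : realFieldType) (N Nsub T : nat) (alpha : R).

Definition is_pmf (n : nat) (p : 'I_n -> R) : Prop :=
  (forall i, 0 <= p i) /\ \sum_(i < n) p i = 1.

Definition uniform_pmf (n : nat) : 'I_n -> R := fun _ => 1 / n%:R.

(* slot s (1-indexed) is attacked iff (1-alpha)T/2 < s <= (1+alpha)T/2 *)
Definition attacked (s : nat) : bool :=
  ((1 - alpha) * T%:R / 2 < s%:R) && (s%:R <= (1 + alpha) * T%:R / 2).

(* outcome of one slot: (chosen user, chosen sub-carrier, blocked sub-carrier or None) *)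
Definition slot_outcome := ('I_N * 'I_Nsub * option 'I_Nsub)%type.
(* outcome of the whole horizon; slot index t : 'I_T is slot number t+1 *)
Definition outcome := {ffun 'I_T -> slot_outcome}.

Definition adv_prob (t : 'I_T) (b : option 'I_Nsub) : R :=
  if attacked t.+1 then (if b is Some _ then 1 / Nsub%:R else 0)
  else (if b is None then 1 else 0).

Definition weight (p : 'I_N -> R) (q : 'I_Nsub -> R) (w : outcome) : R :=
  \prod_(t < T) (p (w t).1.1 * q (w t).1.2 * adv_prob t (w t).2).

(* user i receives a successful update in slot with 0-based index n *)
Definition success (w : outcome) (i : 'I_N) (n : nat) : bool :=
  match insub n : option 'I_T with
  | Some t => ((w t).1.1 == i) && ((w t).2 != Some (w t).1.2)
  | None => false
  end.

(* age_at w i n = a_i(n+1) *)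
Fixpoint age_at (w : outcome) (i : 'I_N) (n : nat) : nat :=
  match n with
  | 0 => 1
  | n'.+1 => if success w i n' then 1 else (age_at w i n').+1
  end.

Definition expect (p : 'I_N -> R) (q : 'I_Nsub -> R) (X : outcome -> R) : R :=
  \sum_(w : outcome) weight p q w * X w.

Definition avg_age (p : 'I_N -> R) (q : 'I_Nsub -> R) : R :=
  1 / T%:R * \sum_(t < T) (1 / N%:R * \sum_(i < N)
     expect p q (fun w => (age_at w i t)%:R)).

End Model.

From HB Require Import structures.
From mathcomp Require Import all_boot all_order all_algebra.
From mathcomp Require Import ring.
Set Implicit Arguments.
Unset Strict Implicit.
Unset Printing Implicit Defensive.
Import Order.TTheory GRing.Theory Num.Theory.
Local Open Scope ring_scope.

(* The blocked sub-carrier is uniform, so in slot s the chosen sub-carrier is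
   free with a probability c_s that does not depend on q.  Slots being
   independent, a user chosen with probability x then has expected age
   E_n(x) = 1 + sum_(j < n) prod_(j <= s < n) (1 - x c_s) in slot n + 1, and
   it remains to show E_n(1/N) <= (1/N) sum_i E_n(p_i) for every pmf p.  This
   holds for constants and affine maps 1 - x c, and is preserved by sums and,
   for nonnegative nonincreasing functions, by products: evaluated at the p_i
   such functions are similarly ordered, so by Chebyshev's sum inequality the
   mean of a product dominates the product of the means. *)

Lemma sumr_option (V : nmodType) (I : finType) (F : option I -> V) :
  \sum_b F b = F None + \sum_i F (Some i).
Proof.
rewrite (bigD1 None) //=; congr (_ + _).
rewrite (reindex_omap Some (fun b => b)) //=; last by case.
by apply: eq_bigl => i; rewrite eqxx.
Qed.

Lemma prod_nat_ord (R : pzSemiRingType) (m j n : nat) (F : nat -> R) :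
  (n <= m)%N ->
  \prod_(j <= s < n) F s = \prod_(t < m) (if (j <= t < n)%N then F t else 1).
Proof.
move=> le_nm; rewrite big_geq_mkord (big_ord_widen_cond _ _ _ le_nm) big_mkcond.
by apply: eq_bigr => t _ /=.
Qed.

Lemma chebyshev_sum (R : numDomainType) (I : finType) (a b : I -> R) :
  (forall i j, 0 <= (a i - a j) * (b i - b j)) ->
  (\sum_i a i) * (\sum_i b i) <= #|I|%:R * \sum_i a i * b i.
Proof.
move=> similar; rewrite -subr_ge0.
have half : \sum_i \sum_j a i * (b i - b j) =
    #|I|%:R * \sum_i a i * b i - (\sum_i a i) * (\sum_i b i).
  rewrite mulr_suml mulr_sumr -sumrB; apply: eq_bigr => i _.
  by rewrite -mulr_sumr sumrB sumr_const -mulr_natr; ring.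
have sym : \sum_i \sum_j a j * (b j - b i) = \sum_i \sum_j a i * (b i - b j).
  exact: exchange_big.
rewrite -(pmulrn_lge0 _ (isT : 0 < 2)%N) mulr2n -half -{1}sym -big_split /=.
apply: sumr_ge0 => i _; rewrite -big_split /=; apply: sumr_ge0 => j _.
by rewrite (_ : _ + _ = (a i - a j) * (b i - b j)) //; ring.
Qed.

Lemma uniform_mass_in01 (R : numFieldType) (n : nat) :
  (0 < n)%N -> (1 / n%:R : R) \in `[0, 1].
Proof.
by move=> n_gt0; rewrite in_itv /= divr_ge0 ?ler0n // div1r invf_le1 ?ltr0n // ler1n.
Qed.

Lemma uniform_massK (R : numFieldType) (n : nat) :
  (0 < n)%N -> 1 / n%:R * n%:R = 1 :> R.
Proof. by move=> n_gt0; rewrite div1r mulVf // pnatr_eq0 -lt0n. Qed.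

Lemma uniform_pmf_sum1 (R : realFieldType) (n : nat) :
  (0 < n)%N -> \sum_(i < n) @uniform_pmf R n i = 1.
Proof.
move=> n_gt0.
by rewrite /uniform_pmf sumr_const card_ord -[_ *+ n]mulr_natr uniform_massK.
Qed.

Section FavorsUniform.
Variables (R : realFieldType) (N : nat) (p : 'I_N -> R).
Hypotheses (N_gt0 : (0 < N)%N) (p_pmf : is_pmf p).

Definition favors_uniform (h : R -> R) : Prop :=
  [/\ {in `[0, 1], forall x, 0 <= h x},
      {in `[0, 1] &, {homo h : x y /~ x <= y}} &
      h (1 / N%:R) <= 1 / N%:R * \sum_i h (p i)].

Lemma pmf_in01 i : p i \in `[0, 1].
Proof.
case: p_pmf => p_ge0 p_sum1; rewrite in_itv /= p_ge0 -p_sum1.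
by rewrite (bigD1 i) //= lerDl sumr_ge0.
Qed.

Lemma uniform_mean_const (c : R) : 1 / N%:R * \sum_(i < N) c = c.
Proof.
by rewrite sumr_const card_ord -[c *+ N]mulr_natr mulrCA (uniform_massK _ N_gt0) mulr1.
Qed.

Lemma eq_favors_uniform h g : h =1 g -> favors_uniform h -> favors_uniform g.
Proof.
move=> e [h_ge0 h_decr h_mean]; split.
- by move=> x x01; rewrite -e h_ge0.
- by move=> x y x01 y01; rewrite -!e; apply: h_decr.
- by rewrite -e (eq_bigr (fun i => h (p i))) // => i _; rewrite e.
Qed.

Lemma favors_uniform_const c : 0 <= c -> favors_uniform (fun=> c).
Proof. by move=> c_ge0; split; rewrite ?uniform_mean_const. Qed.

Lemma favors_uniform_affine c :
  c \in `[0, 1] -> favors_uniform (fun x => 1 - x * c).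
Proof.
rewrite in_itv /= => /andP[c_ge0 c_le1]; split.
- by move=> x; rewrite in_itv /= => /andP[x_ge0 x_le1]; rewrite subr_ge0 mulr_ile1.
- by move=> x y _ _ le_xy; rewrite lerB // ler_wpM2r.
case: p_pmf => _ p_sum1.
rewrite sumrB sumr_const card_ord -mulr_suml p_sum1 mulrBr.
by rewrite (uniform_massK _ N_gt0) !mul1r.
Qed.

Lemma favors_uniformD h g :
  favors_uniform h -> favors_uniform g -> favors_uniform (fun x => h x + g x).
Proof.
move=> [h_ge0 h_decr h_mean] [g_ge0 g_decr g_mean]; split.
- by move=> x x01; rewrite addr_ge0 ?h_ge0 ?g_ge0.
- by move=> x y x01 y01 le_xy; rewrite lerD ?h_decr ?g_decr.
- by rewrite big_split /= mulrDr lerD.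
Qed.

Lemma favors_uniformM h g :
  favors_uniform h -> favors_uniform g -> favors_uniform (fun x => h x * g x).
Proof.
move=> [h_ge0 h_decr h_mean] [g_ge0 g_decr g_mean]; split.
- by move=> x x01; rewrite mulr_ge0 ?h_ge0 ?g_ge0.
- by move=> x y x01 y01 le_xy; rewrite ler_pM ?h_ge0 ?g_ge0 ?h_decr ?g_decr.
have similar i j : 0 <= (h (p i) - h (p j)) * (g (p i) - g (p j)).
  have [pi pj] := (pmf_in01 i, pmf_in01 j).
  have [le_ij|/ltW le_ji] := leP (p i) (p j).
    by rewrite mulr_ge0 // subr_ge0 ?h_decr ?g_decr.
  by rewrite mulr_le0 // subr_le0 ?h_decr ?g_decr.
have := chebyshev_sum similar; rewrite card_ord => cheb.
have u01 := uniform_mass_in01 R N_gt0.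
have m_ge0 : 0 <= 1 / N%:R :> R by rewrite divr_ge0 ?ler0n.
apply: (le_trans (ler_pM (h_ge0 _ u01) (g_ge0 _ u01) h_mean g_mean)).
rewrite mulrACA; apply: le_trans (ler_wpM2l (mulr_ge0 m_ge0 m_ge0) cheb) _.
by rewrite -mulrA [_ * (N%:R * _)]mulrA (uniform_massK _ N_gt0) !mul1r.
Qed.

Lemma favors_uniform_sum (I : Type) (r : seq I) (F : I -> R -> R) :
  (forall i, favors_uniform (F i)) -> favors_uniform (fun x => \sum_(i <- r) F i x).
Proof.
move=> FP; elim: r => [|a r IHr].
  by apply: eq_favors_uniform (favors_uniform_const (lexx 0)) => x; rewrite big_nil.
apply: eq_favors_uniform (favors_uniformD (FP a) IHr) => x.
by rewrite big_cons.
Qed.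

Lemma favors_uniform_prod (I : Type) (r : seq I) (F : I -> R -> R) :
  (forall i, favors_uniform (F i)) -> favors_uniform (fun x => \prod_(i <- r) F i x).
Proof.
move=> FP; elim: r => [|a r IHr].
  by apply: eq_favors_uniform (favors_uniform_const ler01) => x; rewrite big_nil.
apply: eq_favors_uniform (favors_uniformM (FP a) IHr) => x.
by rewrite big_cons.
Qed.

End FavorsUniform.

Section Model.
Variables (R : realFieldType) (N Nsub T : nat) (alpha : R).

Lemma age_atE (w : outcome N Nsub T) i n :
  (age_at w i n)%:R =
  1 + \sum_(0 <= j < n) \prod_(j <= s < n) (~~ success w i s)%:R :> R.
Proof.
elim: n => [|n IHn]; first by rewrite big_geq ?addr0.
have split_last j : (0 <= j < n)%N ->
    \prod_(j <= s < n.+1) (~~ success w i s)%:R =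
    (\prod_(j <= s < n) (~~ success w i s)%:R) * (~~ success w i n)%:R :> R.
  by case/andP=> _ /ltnW le_jn; rewrite big_nat_recr.
rewrite big_nat_recr //= big_nat1 (eq_big_nat _ _ split_last) -mulr_suml.
by case: success; rewrite /= ?mulr0 ?addr0 // mulr1 -natr1 IHn addrA.
Qed.

Definition delivered (i : 'I_N) (o : slot_outcome N Nsub) : bool :=
  (o.1.1 == i) && (o.2 != Some o.1.2).

Lemma success_ord (w : outcome N Nsub T) i (t : 'I_T) :
  success w i t = delivered i (w t).
Proof. by rewrite /success valK. Qed.

Definition delivery_prob (s : nat) : R :=
  1 - (if attacked T alpha s.+1 then 1 / Nsub%:R else 0).

Definition expected_age (n : nat) (x : R) : R :=
  1 + \sum_(0 <= j < n) \prod_(j <= s < n) (1 - x * delivery_prob s).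

Hypothesis Nsub_gt0 : (0 < Nsub)%N.

Lemma delivery_prob_in01 s : delivery_prob s \in `[0, 1].
Proof.
rewrite in_itv /= /delivery_prob; case: attacked; last by rewrite subr0 ler01 lexx.
have := uniform_mass_in01 R Nsub_gt0; rewrite in_itv /= => /andP[m_ge0 m_le1].
by rewrite subr_ge0 m_le1 gerBl m_ge0.
Qed.

Lemma expected_age_favors_uniform (p : 'I_N -> R) n :
  (0 < N)%N -> is_pmf p -> favors_uniform p (expected_age n).
Proof.
move=> N_gt0 p_pmf.
apply: favors_uniformD; first exact (favors_uniform_const p N_gt0 ler01).
apply: (@favors_uniform_sum _ _ p N_gt0 _ _
  (fun j x => \prod_(j <= s < n) (1 - x * delivery_prob s))) => j /=.
apply: (@favors_uniform_prod _ _ p N_gt0 p_pmf _ _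
  (fun s x => 1 - x * delivery_prob s)) => s /=.
exact (favors_uniform_affine N_gt0 p_pmf (delivery_prob_in01 s)).
Qed.

Lemma adv_prob_sum1 (t : 'I_T) : \sum_(b : option 'I_Nsub) adv_prob alpha t b = 1.
Proof.
rewrite sumr_option /adv_prob; case: attacked; last by rewrite big1 ?addr0.
by rewrite add0r; exact: uniform_pmf_sum1.
Qed.

Lemma adv_prob_unblocked (t : 'I_T) (j : 'I_Nsub) :
  \sum_(b | b != Some j) adv_prob alpha t b = delivery_prob t.
Proof.
rewrite /delivery_prob -[X in X - _](adv_prob_sum1 t) [in RHS](bigD1 (Some j)) //=.
by rewrite [adv_prob _ _ _ + _]addrC addrK.
Qed.

Variables (p : 'I_N -> R) (q : 'I_Nsub -> R).
Hypotheses (p_sum1 : \sum_i p i = 1) (q_sum1 : \sum_j q j = 1).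

Definition slot_prob (t : 'I_T) (o : slot_outcome N Nsub) : R :=
  p o.1.1 * q o.1.2 * adv_prob alpha t o.2.

Lemma sum_slot_outcome (F : slot_outcome N Nsub -> R) :
  \sum_o F o = \sum_u \sum_j \sum_b F (u, j, b).
Proof. by rewrite !pair_big; apply: eq_bigr => -[[]]. Qed.

Lemma slot_prob_sum1 t : \sum_o slot_prob t o = 1.
Proof.
rewrite sum_slot_outcome -[RHS]p_sum1; apply: eq_bigr => u _.
rewrite -[RHS]mulr1 -q_sum1 mulr_sumr; apply: eq_bigr => j _.
by rewrite /slot_prob /= -big_distrr /= adv_prob_sum1 mulr1.
Qed.

Lemma slot_delivered_prob t i :
  \sum_o slot_prob t o * (delivered i o)%:R = p i * delivery_prob t.
Proof.
rewrite sum_slot_outcome (bigD1 i) //= [X in _ + X]big1 ?addr0 => [|u neq_ui];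
  last first.
  apply: big1 => j _; apply: big1 => b _.
  by rewrite /delivered /= (negbTE neq_ui) mulr0.
transitivity (\sum_j p i * q j * delivery_prob t).
  apply: eq_bigr => j _; rewrite -(adv_prob_unblocked t j) mulr_sumr [RHS]big_mkcond.
  apply: eq_bigr => b _.
  by rewrite /slot_prob /delivered /= eqxx mulr_natr mulrb; case: ifP; rewrite ?mulr0.
by rewrite -mulr_suml -mulr_sumr q_sum1 mulr1.
Qed.

Lemma slot_undelivered_prob t i :
  \sum_o slot_prob t o * (~~ delivered i o)%:R = 1 - p i * delivery_prob t.
Proof.
rewrite -[X in X - _](slot_prob_sum1 t) -slot_delivered_prob -sumrB.
apply: eq_bigr => o _.
by case: delivered; rewrite ?mulr1 ?mulr0 ?subr0 ?subrr.
Qed.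

Lemma eq_expect (X Y : outcome N Nsub T -> R) :
  X =1 Y -> expect alpha p q X = expect alpha p q Y.
Proof. by move=> eqXY; apply: eq_bigr => w _; rewrite eqXY. Qed.

Lemma expectD (X Y : outcome N Nsub T -> R) :
  expect alpha p q (fun w => X w + Y w) = expect alpha p q X + expect alpha p q Y.
Proof. by rewrite -big_split; apply: eq_bigr => w _; rewrite mulrDr. Qed.

Lemma expect_sum (I : Type) (r : seq I) (X : I -> outcome N Nsub T -> R) :
  expect alpha p q (fun w => \sum_(j <- r) X j w) =
  \sum_(j <- r) expect alpha p q (X j).
Proof.
rewrite /expect; under eq_bigr => w _ do rewrite mulr_sumr.
exact: exchange_big.
Qed.

Lemma expect_prod (h : 'I_T -> slot_outcome N Nsub -> R) :
  expect alpha p q (fun w => \prod_(t < T) h t (w t)) =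
  \prod_(t < T) \sum_o slot_prob t o * h t o.
Proof.
rewrite bigA_distr_bigA /=; apply: eq_bigr => w _.
by rewrite /weight -big_split.
Qed.

Lemma expect1 : expect alpha p q (fun _ : outcome N Nsub T => 1) = 1.
Proof.
rewrite (@eq_expect _ (fun w => \prod_(t < T) 1)) => [|w]; last by rewrite big1.
rewrite (expect_prod (fun _ _ => 1)) big1 // => t _.
by under eq_bigr do rewrite mulr1; exact: slot_prob_sum1.
Qed.

Lemma expect_age i n : (n <= T)%N ->
  expect alpha p q (fun w : outcome N Nsub T => (age_at w i n)%:R) =
  expected_age n (p i).
Proof.
move=> le_nT; rewrite (eq_expect (fun w => age_atE w i n)) expectD expect1.
congr (_ + _); rewrite expect_sum; apply: eq_bigr => j _.
rewrite (prod_nat_ord _ _ le_nT).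
transitivity (\prod_(t < T) \sum_o
    slot_prob t o * (if (j <= t < n)%N then (~~ delivered i o)%:R else 1)).
  rewrite -expect_prod; apply: eq_expect => w; rewrite (prod_nat_ord _ _ le_nT).
  by apply: eq_bigr => t _; rewrite success_ord.
apply: eq_bigr => t _; case: ifP => _; first exact: slot_undelivered_prob.
by under eq_bigr do rewrite mulr1; exact: slot_prob_sum1.
Qed.

End Model.

Theorem theorem12 (R : realFieldType) (N Nsub T : nat) (alpha : R) :
  (0 < N)%N -> (2 <= Nsub)%N -> (0 < T)%N ->
  0 < alpha -> alpha < 1 ->
  (exists k : nat, alpha * T%:R = k%:R) ->
  (exists m : nat, (1 - alpha) * T%:R = (2 * m)%:R) ->
  forall (p : 'I_N -> R) (q : 'I_Nsub -> R),
    is_pmf p -> is_pmf q ->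
    @avg_age R N Nsub T alpha (@uniform_pmf R N) (@uniform_pmf R Nsub)
      <= @avg_age R N Nsub T alpha p q.
Proof.
move=> N_gt0 Nsub_ge2 _ _ _ _ _ p q p_pmf q_pmf.
have Nsub_gt0 : (0 < Nsub)%N := ltnW Nsub_ge2.
have [[_ p_sum1] [_ q_sum1]] := (p_pmf, q_pmf).
have [u_sum1 us_sum1] := (uniform_pmf_sum1 R N_gt0, uniform_pmf_sum1 R Nsub_gt0).
rewrite /avg_age ler_wpM2l ?divr_ge0 ?ler0n //; apply: ler_sum => t _.
have le_tT : (t <= T)%N := ltnW (ltn_ord t).
rewrite (eq_bigr _ (fun i _ => expect_age alpha Nsub_gt0 u_sum1 us_sum1 i le_tT)).
rewrite (eq_bigr _ (fun i _ => expect_age alpha Nsub_gt0 p_sum1 q_sum1 i le_tT)).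
have [_ _ uniform_le] := expected_age_favors_uniform T alpha Nsub_gt0 t N_gt0 p_pmf.
by rewrite /uniform_pmf uniform_mean_const.
Qed.
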